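(* Let $0<s_1<s_2<1$, $2s_1<d<\frac{2s_1s_2}{s_2-s_1}$, $a>0$, and suppose $g$ satisfies $(G_1)$–$(G_3)$. Then $I$ restricted to $\mathcal{P}_{\infty,a}$ is coercive: $I(u)\to+\infty$ as $\|u\|\to\infty$ with $u\in\mathcal{P}_{\infty,a}$.
   Context: For $s\in(0,1)$, $|\nabla_s u|_2^2=\int_{\mathbb{R}^d\times\mathbb{R}^d}\frac{|u(x)-u(y)|^2}{|x-y|^{d+2s}}dx\,dy$; $|\cdot|_p$ is the $L^p(\mathbb{R}^d)$ norm; $H^{s_1,s_2}(\mathbb{R}^d)=\{u\in L^2(\mathbb{R}^d):|\nabla_{s_1}u|_2<\infty,\ |\nabla_{s_2}u|_2<\infty\}$ with norm $\|u\|^2=|\nabla_{s_1}u|_2^2+|\nabla_{s_2}u|_2^2+|u|_2^2$. $S_a=\{u\in H^{s_1,s_2}(\mathbb{R}^d):|u|_2^2=a\}$. $g:\mathbb{R}\to\mathbb{R}$, $G(s)=\int_0^sg$, $\widetilde G(s)=\frac12g(s)s-G(s)$. $(G_1)$: $g$ continuous, odd. $(G_2)$: there exist $\alpha,\beta$ with $2+\frac{4s_2}{d}<\alpha<\beta<\frac{2d}{d-2s_1}$ and $\alpha G(s)\le g(s)s\le\beta G(s)$ for all $s$. $(G_3)$: $\widetilde G'$ exists and $\widetilde G'(s)s\ge\alpha\widetilde G(s)$ for all $s$. $I(u)=\frac12|\nabla_{s_1}u|_2^2+\frac12|\nabla_{s_2}u|_2^2-\int_{\mathbb{R}^d}G(u)dx$;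 $P_\infty(u)=s_1|\nabla_{s_1}u|_2^2+s_2|\nabla_{s_2}u|_2^2-d\int_{\mathbb{R}^d}\widetilde G(u)dx$; $\mathcal{P}_{\infty,a}=\{u\in S_a:P_\infty(u)=0\}$. *)

From HB Require Import structures.
From mathcomp Require Import all_boot all_order all_algebra.
From mathcomp Require Import all_classical all_reals all_analysis.
Set Implicit Arguments. Unset Strict Implicit. Unset Printing Implicit Defensive.
Import Order.TTheory GRing.Theory Num.Theory.
Import numFieldNormedType.Exports.
Local Open Scope classical_set_scope.
Local Open Scope ring_scope.

Section Defs.
Variable R : realType.

(* Lebesgue integral over R^d = 'rV[R]_d, defined as the iterated
   one-dimensional Lebesgue integral over the coordinates (for the
   nonnegative Borel integrands used below this coincides, by Tonelli,
   with the integral w.r.t. d-dimensional Lebesgue measure). *)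
Fixpoint intRd (n : nat) : ('rV[R]_n -> \bar R) -> \bar R :=
  match n with
  | 0 => fun f => f 0
  | n'.+1 => fun f =>
      (\int[@lebesgue_measure R]_x
          intRd (fun v : 'rV[R]_n' => f (row_mx (const_mx x : 'rV[R]_1) v)))%E
  end.

Definition enorm (d : nat) (v : 'rV[R]_d) : R := Num.sqrt (\sum_i v 0 i ^+ 2).

Definition borel_Rd (d : nat) (u : 'rV[R]_d -> R) : Prop :=
  forall B : set R, measurable B ->
    (<<s [set A : set 'rV[R]_d | open A] >>) (u @^-1` B).

Definition L2sq (d : nat) (u : 'rV[R]_d -> R) : \bar R :=
  intRd (fun x => ((u x) ^+ 2)%:E).

Definition gagliardo_sq (d : nat) (s : R) (u : 'rV[R]_d -> R) : \bar R :=
  intRd (fun x => intRd (fun y =>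
    ((u x - u y) ^+ 2 / (enorm (x - y) `^ (d%:R + 2 * s)))%:E)).

Definition in_H (d : nat) (s1 s2 : R) (u : 'rV[R]_d -> R) : Prop :=
  [/\ borel_Rd u, (L2sq u < +oo)%E, (gagliardo_sq s1 u < +oo)%E
    & (gagliardo_sq s2 u < +oo)%E].

Definition Hnorm (d : nat) (s1 s2 : R) (u : 'rV[R]_d -> R) : R :=
  Num.sqrt (fine (gagliardo_sq s1 u) + fine (gagliardo_sq s2 u) + fine (L2sq u)).

Definition Gprim (g : R -> R) (s : R) : R :=
  if 0 <= s then Rintegral (@lebesgue_measure R) `[0, s] g
  else - Rintegral (@lebesgue_measure R) `[s, 0] g.

Definition Gtilde (g : R -> R) (s : R) : R := g s * s / 2 - Gprim g s.

Definition intF (d : nat) (F : R -> R) (u : 'rV[R]_d -> R) : R :=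
  fine (intRd (fun x => (F (u x))%:E)).

Definition Ifun (d : nat) (s1 s2 : R) (g : R -> R) (u : 'rV[R]_d -> R) : R :=
  fine (gagliardo_sq s1 u) / 2 + fine (gagliardo_sq s2 u) / 2 - intF (Gprim g) u.

Definition Pinf (d : nat) (s1 s2 : R) (g : R -> R) (u : 'rV[R]_d -> R) : R :=
  s1 * fine (gagliardo_sq s1 u) + s2 * fine (gagliardo_sq s2 u)
  - d%:R * intF (Gtilde g) u.

Definition in_Pinf_a (d : nat) (s1 s2 : R) (g : R -> R) (a : R)
    (u : 'rV[R]_d -> R) : Prop :=
  [/\ in_H s1 s2 u, fine (L2sq u) = a & Pinf s1 s2 g u = 0].

End Defs.

(* On the Pohozaev manifold the Ambrosetti-Rabinowitz condition (G2) gives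
   G <= 2/(alpha-2) Gtilde pointwise, while P_infty(u) = 0 bounds
   d \int Gtilde(u) by s2 (|nabla_s1 u|^2 + |nabla_s2 u|^2).  Hence
   I(u) >= (1/2 - 2 s2 / ((alpha-2) d)) (||u||^2 - a), and the constant is
   positive exactly because alpha > 2 + 4 s2 / d. *)

From HB Require Import structures.
From mathcomp Require Import all_boot all_order all_algebra.
From mathcomp Require Import all_classical all_reals all_analysis.
From mathcomp Require Import ring lra.
Import Order.TTheory GRing.Theory Num.Theory.
Import numFieldNormedType.Exports.
Import HBNNSimple.
Local Open Scope classical_set_scope.
Local Open Scope ring_scope.

Section ge0_integral_le_scale.
Local Open Scope ereal_scope.
Context d (T : measurableType d) (R : realType).
Variable mu : {measure set T -> \bar R}.

(* No measurability is assumed: [intRd] integrates arbitrary functions, and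
   for nonnegative ones the integral is the supremum over simple minorants. *)
Lemma ge0_integral_le_scale (k : R) (f h : T -> \bar R) : (0 < k)%R ->
  (forall x, 0 <= f x) -> (forall x, 0 <= h x) ->
  (forall x, f x <= k%:E * h x) ->
  \int[mu]_x f x <= k%:E * \int[mu]_x h x.
Proof.
move=> k0 f0 h0 fh; rewrite !ge0_integralTE//.
apply: ge_ereal_sup => _ [s sf <-].
have kV0 : (0 <= k^-1)%R by rewrite invr_ge0 ltW.
pose sk := scale_nnsfun s kV0.
have -> : sintegral mu s = k%:E * sintegral mu sk.
  rewrite (_ : sintegral _ sk = sintegral mu (cst k^-1 \* s)%R) //.
  by rewrite sintegralrM muleA -EFinM mulfV ?gt_eqF ?mul1e.
rewrite lee_pmul2l ?lte_fin//; apply: ereal_sup_ubound; exists sk => //= x.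
have := le_trans (sf x) (fh x); have := h0 x.
case: (h x) => [r| |] //= _; last by rewrite leey.
by rewrite -EFinM !lee_fin ler_pdivrMl.
Qed.

End ge0_integral_le_scale.

Section intRd.
Local Open Scope ereal_scope.
Context {R : realType}.

Lemma intRd_ge0 n (f : 'rV[R]_n -> \bar R) : (forall x, 0 <= f x) ->
  0 <= intRd f.
Proof.
elim: n f => [|n IH] f f0 /=; first exact: f0.
by apply: integral_ge0 => x _; apply: IH.
Qed.

Lemma intRd_le_scale n (k : R) (f h : 'rV[R]_n -> \bar R) : (0 < k)%R ->
  (forall x, 0 <= f x) -> (forall x, 0 <= h x) ->
  (forall x, f x <= k%:E * h x) -> intRd f <= k%:E * intRd h.
Proof.
move=> k0; elim: n f h => [|n IH] f h f0 h0 fh /=; first exact: fh.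
by apply: ge0_integral_le_scale => // x; [apply: intRd_ge0..|apply: IH].
Qed.

Lemma L2sq_ge0 n (u : 'rV[R]_n -> R) : 0 <= L2sq u.
Proof. by apply: intRd_ge0 => x; rewrite lee_fin sqr_ge0. Qed.

Lemma gagliardo_sq_ge0 n s (u : 'rV[R]_n -> R) : 0 <= gagliardo_sq s u.
Proof.
apply: intRd_ge0 => x; apply: intRd_ge0 => y.
by rewrite lee_fin divr_ge0 ?sqr_ge0 ?powR_ge0.
Qed.

Lemma Hnorm_sqr n s1 s2 (u : 'rV[R]_n -> R) : (Hnorm s1 s2 u ^+ 2 =
  fine (gagliardo_sq s1 u) + fine (gagliardo_sq s2 u) + fine (L2sq u))%R.
Proof.
rewrite sqr_sqrtr// !addr_ge0// fine_ge0//;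
  by [exact: gagliardo_sq_ge0 | exact: L2sq_ge0].
Qed.

End intRd.

Lemma Gprim_ge0 {R : realType} (g : R -> R) (alpha beta : R) s :
  alpha < beta -> alpha * Gprim g s <= g s * s -> g s * s <= beta * Gprim g s ->
  0 <= Gprim g s.
Proof.
move=> ab lo hi.
by rewrite -(@pmulr_rge0 _ (beta - alpha)) ?subr_gt0//; lra.
Qed.

Section Ambrosetti_Rabinowitz.
Context {R : realType} (g : R -> R) (alpha : R).
Hypothesis alpha_gt2 : 2 < alpha.
Hypothesis AR : forall s, alpha * Gprim g s <= g s * s.

Lemma Gprim_le_Gtilde s : Gprim g s <= 2 / (alpha - 2) * Gtilde g s.
Proof.
rewrite mulrC mulrA ler_pdivlMr ?subr_gt0// /Gtilde.
by have := AR s; lra.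
Qed.

Lemma Gtilde_ge0 s : 0 <= Gprim g s -> 0 <= Gtilde g s.
Proof.
move=> G0; have a2 : 0 <= alpha - 2 by rewrite subr_ge0 ltW.
by have := mulr_ge0 a2 G0; have := AR s; rewrite /Gtilde; lra.
Qed.

End Ambrosetti_Rabinowitz.

Lemma fine_le_scale {R : realType} (k : R) (x y : \bar R) : 0 <= k ->
  (0 <= x)%E -> (x <= k%:E * y)%E -> y \is a fin_num -> fine x <= k * fine y.
Proof.
move=> k0 x0 + /fineK yE; rewrite -yE -EFinM.
by case: x x0 => [r| |] //=; rewrite lee_fin.
Qed.

Lemma pohozaev_energy_bound {R : realType} (A B x y D s1 s2 k : R) :
  0 <= A -> 0 <= B -> s1 <= s2 -> 0 < D -> 0 <= k ->
  x <= k * y -> s1 * A + s2 * B = D * y ->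
  (1/2 - k * s2 / D) * (A + B) <= A / 2 + B / 2 - x.
Proof.
move=> A0 B0 s12 D0 k0 xy Py.
have s12A : s1 * A <= s2 * A by rewrite ler_wpM2r.
have kyD : k * y * D <= k * s2 * (A + B).
  by rewrite -mulrA [y * D]mulrC -Py -mulrA ler_wpM2l//; lra.
have xB : x <= k * s2 / D * (A + B).
  rewrite mulrAC ler_pdivlMr//; apply: le_trans kyD.
  by rewrite ler_wpM2r // ltW.
by rewrite mulrBl; lra.
Qed.

Lemma coercivity_const_gt0 {R : realType} (s2 D alpha : R) : 0 < D ->
  2 < alpha -> 2 + 4 * s2 / D < alpha -> 0 < 1/2 - 2 / (alpha - 2) * s2 / D.
Proof.
move=> D0 alpha_gt2 alpha_gt.
have -> : 1/2 - 2 / (alpha - 2) * s2 / D = (1 - 4 * s2 / D / (alpha - 2)) / 2.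
  by field; rewrite subr_eq0 !gt_eqF.
by rewrite divr_gt0// subr_gt0 ltr_pdivrMr ?subr_gt0// mul1r ltrBrDl.
Qed.

Lemma Ifun_lower_bound_Pinf {R : realType} {s1 s2 a alpha : R} {d : nat}
    {g : R -> R} {u : 'rV[R]_d -> R} :
  0 < s1 -> s1 <= s2 -> (0 < d)%N -> 2 < alpha ->
  (forall s, 0 <= Gprim g s) -> (forall s, alpha * Gprim g s <= g s * s) ->
  in_Pinf_a s1 s2 g a u -> a < Hnorm s1 s2 u ^+ 2 ->
  (1/2 - 2 / (alpha - 2) * s2 / d%:R) * (Hnorm s1 s2 u ^+ 2 - a)
    <= Ifun s1 s2 g u.
Proof.
move=> s10 s12 d0 alpha_gt2 G0 AR [_ L2a Pu].
have D0 : 0 < d%:R :> R by rewrite ltr0n.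
rewrite Hnorm_sqr L2a addrK ltrDr.
set A := fine (gagliardo_sq s1 u); set B := fine (gagliardo_sq s2 u) => AB.
set X := intRd (fun x => (Gprim g (u x))%:E).
set Y := intRd (fun x => (Gtilde g (u x))%:E).
have A0 : 0 <= A by apply/fine_ge0/gagliardo_sq_ge0.
have B0 : 0 <= B by apply/fine_ge0/gagliardo_sq_ge0.
have PY : s1 * A + s2 * B = d%:R * fine Y by apply/eqP; rewrite -subr_eq0 -Pu.
have Yfin : Y \is a fin_num.
  (* [fine +oo = 0]: the Pohozaev identity rules out [Y = +oo] as [A + B > 0] *)
  have : 0 < d%:R * fine Y by rewrite -PY; nra.
  by case: (Y); rewrite //= mulr0 ltxx.
have k0 : 0 < 2 / (alpha - 2) by rewrite divr_gt0// subr_gt0.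
have XY : (X <= (2 / (alpha - 2))%:E * Y)%E.
  apply: intRd_le_scale => // x; rewrite lee_fin.
  - exact: G0.
  - exact: Gtilde_ge0 alpha_gt2 AR _ (G0 _).
  - exact: Gprim_le_Gtilde alpha_gt2 AR _.
have -> : Ifun s1 s2 g u = A / 2 + B / 2 - fine X by [].
apply: pohozaev_energy_bound PY => //; first exact: ltW.
apply: fine_le_scale XY Yfin; first exact: ltW.
by apply: intRd_ge0 => x; rewrite lee_fin.
Qed.

Theorem lemma3p4 (R : realType) (s1 s2 : R) (d : nat) (a : R) (g : R -> R)
    (alpha beta : R) :
  0 < s1 -> s1 < s2 -> s2 < 1 ->
  2 * s1 < d%:R -> d%:R < 2 * s1 * s2 / (s2 - s1) ->
  0 < a ->
  (* (G1) *)
  continuous g -> (forall s, g (- s) = - g s) ->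
  (* (G2) *)
  2 + 4 * s2 / d%:R < alpha -> alpha < beta -> beta < 2 * d%:R / (d%:R - 2 * s1) ->
  (forall s, alpha * Gprim g s <= g s * s /\ g s * s <= beta * Gprim g s) ->
  (* (G3) *)
  (forall s, derivable (Gtilde g) s 1) ->
  (forall s, alpha * Gtilde g s <= derive1 (Gtilde g) s * s) ->
  (* coercivity of I on P_{infty,a} *)
  forall M : R, exists K : R, forall u : 'rV[R]_d -> R,
    in_Pinf_a s1 s2 g a u -> K < Hnorm s1 s2 u -> M < Ifun s1 s2 g u.
Proof.
move=> s10 s12 _ ds1 _ a0 _ _ alpha_gt ab _ AR _ _ M.
have D0 : 0 < d%:R :> R by apply: lt_trans ds1; rewrite mulr_gt0.
have alpha_gt2 : 2 < alpha.
  suff : 0 < 4 * s2 / d%:R by lra.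
  by rewrite divr_gt0// mulr_gt0// (lt_trans s10).
have G0 s : 0 <= Gprim g s by have [lo hi] := AR s; exact: Gprim_ge0 ab lo hi.
have ARlo s : alpha * Gprim g s <= g s * s by have [] := AR s.
set c := 1/2 - 2 / (alpha - 2) * s2 / d%:R.
have c0 : 0 < c by exact: coercivity_const_gt0.
have K0 : 0 <= a + `|M| / c by rewrite addr_ge0 ?divr_ge0 // ltW.
exists (Num.sqrt (a + `|M| / c)) => u Pu K_lt.
have Ka : a + `|M| / c < Hnorm s1 s2 u ^+ 2.
  rewrite -[ltLHS](sqr_sqrtr K0) !expr2.
  by apply: ltr_pM; rewrite ?sqrtr_ge0.
have aH : a < Hnorm s1 s2 u ^+ 2.
  by apply: le_lt_trans Ka; rewrite lerDl divr_ge0// ltW.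
have d0 : (0 < d)%N by rewrite -(ltr0n R).
have := Ifun_lower_bound_Pinf s10 (ltW s12) d0 alpha_gt2 G0 ARlo Pu aH.
apply: lt_le_trans; apply: le_lt_trans (ler_norm M) _.
by rewrite -/c -ltr_pdivrMl// ltrBrDl mulrC.
Qed.
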